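(* Let $d\ge2$. If $p<1-p_c^{\operatorname{bond}}(d)$, then \[ P_p\bigl(K(\omega)\text{ encloses }\tilde B(n)\bigr)\longrightarrow 0\quad\text{as }n\to\infty. \]
   Context: A face is a $(d-1)$-dimensional elementary cube in $\mathbb{R}^d$ (a product of intervals $[l,l]$ or $[l,l+1]$, $l\in\mathbb{Z}$, with exactly one degenerate factor). In face percolation with parameter $p$ each face is open independently with probability $p$ (measure $P_p$); $K(\omega)$ is the union of open faces. $(\mathbb{Z}^d)^*=\mathbb{Z}^d+(1/2,\dots,1/2)$ and $\tilde B(n)=\{x^*\in(\mathbb{Z}^d)^*:\|x^*\|_\infty<n\}$. A union $X$ of faces encloses $V\subset(\mathbb{Z}^d)^*$ if there are finitely many faces $Q_1,\dots,Q_k$ of $X$ such that $V$ is contained in a bounded connected component of $\mathbb{R}^d\setminus\bigcup_{i=1}^kQ_i$. $p_c^{\operatorname{bond}}(d)$ is the critical probability of Bernoulli bond percolation on $\mathbb{Z}^d$. *)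

From HB Require Import structures.
From Stdlib Require Import Relations.
From mathcomp Require Import all_boot all_order all_algebra.
From mathcomp Require Import all_classical all_reals all_analysis.

Set Implicit Arguments.
Unset Strict Implicit.
Unset Printing Implicit Defensive.

Import Order.TTheory GRing.Theory Num.Theory.
Import numFieldNormedType.Exports.
Local Open Scope classical_set_scope.
Local Open Scope ring_scope.

Definition site (d : nat) := {ffun 'I_d -> int}.

Definition iid_bernoulli (R : realType) (dT : measure_display)
  (T : measurableType dT) (I : eqType) (P : probability T R)
  (X : I -> T -> bool) (p : R) : Prop :=
  (forall i, measurable [set t | X i t]) /\
  forall (s : seq I) (b : I -> bool), uniq s ->
    P (\bigcap_(i in [set` s]) [set t | X i t = b i]) =
    (\prod_(i <- s) (if b i then p else 1 - p))%:E.

(* Faces: (l, i) stands for the elementary cube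
   prod_j I_j with I_i = [l_i, l_i] and I_j = [l_j, l_j + 1] for j <> i. *)
Definition face (d : nat) := (site d * 'I_d)%type.

Definition face_set (R : realType) (d : nat) (Q : face d) : set 'rV[R]_d :=
  [set x | forall j : 'I_d,
     if j == Q.2 then x ord0 j = (Q.1 j)%:~R
     else ((Q.1 j)%:~R <= x ord0 j <= (Q.1 j)%:~R + 1)].

Definition bounded_Rd (R : realType) (d : nat) (C : set 'rV[R]_d) : Prop :=
  exists M : R, forall x, C x -> forall j, `|x ord0 j| <= M.

Definition encloses (R : realType) (d : nat) (X : face d -> Prop)
  (V : set 'rV[R]_d) : Prop :=
  exists Qs : seq (face d), (forall Q, Q \in Qs -> X Q) /\
    exists x : 'rV[R]_d,
      let A := ~` (\bigcup_(Q in [set` Qs]) @face_set R d Q) in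
      [/\ A x, bounded_Rd (connected_component A x)
        & V `<=` connected_component A x].

Definition dual_box (R : realType) (d : nat) (n : nat) : set 'rV[R]_d :=
  [set x | (exists z : site d, forall j, x ord0 j = (z j)%:~R + 2^-1) /\
           forall j, `|x ord0 j| < n%:R].

(* Bond percolation on Z^d: the edge (z, i) joins z and z + e_i. *)
Definition edge (d : nat) := (site d * 'I_d)%type.

Definition shift (d : nat) (z : site d) (i : 'I_d) : site d :=
  [ffun j => z j + (j == i)%:Z].

Definition origin (d : nat) : site d := [ffun => 0].

Definition open_adj (d : nat) (omega : edge d -> bool) (x y : site d) : Prop :=
  exists e : edge d, omega e /\
    ((e.1 = x /\ y = shift e.1 e.2) \/ (e.1 = y /\ x = shift e.1 e.2)).

Definition origin_percolates (d : nat) (omega : edge d -> bool) : Prop :=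
  ~ finite_set [set y | clos_refl_trans (site d) (open_adj omega) (origin d) y].

Definition bond_theta_zero (R : realType) (d : nat) (q : R) : Prop :=
  forall (dT : measure_display) (T : measurableType dT) (P : probability T R)
    (omega : edge d -> T -> bool),
    @iid_bernoulli R dT T (edge d) P omega q ->
    P [set t | origin_percolates (fun e => omega e t)] = 0%E.

Definition pc_bond (R : realType) (d : nat) : R :=
  sup [set q : R | 0 <= q <= 1 /\ @bond_theta_zero R d q].

From Pilot Require Import Defs.
From HB Require Import structures.
From Stdlib Require Import Relations.
From mathcomp Require Import all_boot all_order all_algebra.
From mathcomp Require Import all_classical all_reals all_analysis.
From mathcomp Require Import finmap ring lra zify.
Import Order.TTheory GRing.Theory Num.Theory.
Import numFieldNormedType.Exports.
Local Open Scope classical_set_scope.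
Local Open Scope ring_scope.
Set Implicit Arguments.
Unset Strict Implicit.
Unset Printing Implicit Defensive.

(* Closed faces form a dual bond percolation of parameter [1 - p > p_c] on the
   dual lattice: the bond from [z + 1/2] to [z + e_i + 1/2] is open iff the
   face it crosses is closed, so the dual origin percolates with probability
   [theta > 0].  A dual open path never meets an open face, so if [K(omega)]
   encloses the dual box of radius [n], every dual site of that box lies in a
   bounded component and its dual cluster is finite.
   Let [G_r] be the event that the dual origin reaches distance [r], and
   [M_r] the event that no dual site of the box of radius [r + 1] percolates
   once the bonds based in the box of radius [r] are removed.  For [n > r + 1]
   the enclosure event lies in [M_r]; [M_r] is the increasing union of events
   independent of [G_r]; and [M_r] excludes percolation of the origin, since
   removing finitely many bonds from an infinite cluster leaves an infinite
   cluster at one of their endpoints.  Hence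
   [P(G_r) P(M_r) + theta <= P(G_r)], so the enclosure probability is at most
   [1 - theta / P(G_r)], which tends to [0] as [r -> oo]. *)

(* mathcomp-analysis also defines a [shift]. *)
Local Notation shift := Defs.shift.

Section BernoulliCylinders.
Context (R : realType) (dT : measure_display) (T : measurableType dT)
  (P : probability T R) (I : eqType) (X : I -> T -> bool) (p : R).
Hypothesis iidX : iid_bernoulli P X p.

Definition bern_weight (b : bool) : R := if b then p else 1 - p.

Definition fupd (c : I -> bool) (i : I) (b : bool) : I -> bool :=
  fun j => if j == i then b else c j.

Definition override (s : seq I) (g c : I -> bool) : I -> bool :=
  fun i => if i \in s then g i else c i.

(* The probability of [F] when the coordinates in [s] are i.i.d. Bernoulli(p)
   and all other coordinates are frozen to the values of [c]. *)
Fixpoint frozen_prob (s : seq I) (F : (I -> bool) -> Prop) (c : I -> bool) : R :=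
  if s is i :: s' then
    p * frozen_prob s' F (fupd c i true) + (1 - p) * frozen_prob s' F (fupd c i false)
  else if `[< F c >] then 1 else 0.

Definition coord_event (i : I) (b : bool) : set T := [set t | X i t = b].

Definition cylinder (s : seq I) (b : I -> bool) : set T :=
  \bigcap_(i in [set` s]) coord_event i (b i).

Definition event (F : (I -> bool) -> Prop) : set T := [set t | F (X^~ t)].

Definition frozen_event (s : seq I) (F : (I -> bool) -> Prop) (c : I -> bool) :=
  event (fun g => F (override s g c)).

Definition depends_on (s : seq I) (F : (I -> bool) -> Prop) :=
  forall g c, F (override s g c) <-> F g.

Definition product_law (E : set T) (kappa : R) (s' : seq I) :=
  measurable E /\
  forall s b, uniq s -> all [predC s'] s ->
    P (cylinder s b `&` E) = ((\prod_(i <- s) bern_weight (b i)) * kappa)%:E.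

Lemma measurable_coord_event i b : measurable (coord_event i b).
Proof.
case: b; first exact: iidX.1.
rewrite (_ : coord_event i false = ~` coord_event i true).
  exact/measurableC/iidX.1.
by apply/seteqP; split => t; rewrite /coord_event /=; case: (X i t).
Qed.

Lemma measurable_cylinder s b : measurable (cylinder s b).
Proof. by apply: fin_bigcap_measurable => // i _; exact: measurable_coord_event. Qed.

Lemma cylinder_nil b : cylinder [::] b = setT.
Proof. by rewrite /cylinder set_nil bigcap_set0. Qed.

Lemma cylinder_cons i s b :
  cylinder (i :: s) b = coord_event i (b i) `&` cylinder s b.
Proof.
suff E : [set` i :: s] = i |` [set` s] by rewrite /cylinder E bigcap_setU1.
apply/seteqP; split => j; rewrite /= inE.
  by case/orP => [/eqP->|js]; [left|right].
by case=> [->|js]; rewrite ?eqxx ?js ?orbT.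
Qed.

Lemma cylinder_fupd i s b x : i \notin s -> cylinder s (fupd b i x) = cylinder s b.
Proof.
move=> si; rewrite /cylinder; apply: eq_bigcapr => j /= js.
by rewrite /fupd; case: eqP => // ji; rewrite -ji js in si.
Qed.

Lemma frozen_event_nil F c : frozen_event [::] F c = if `[< F c >] then setT else set0.
Proof. by apply/seteqP; split => t; case: asboolP. Qed.

Lemma frozen_event_cons i s F c :
  frozen_event (i :: s) F c =
  (coord_event i true `&` frozen_event s F (fupd c i true)) `|`
  (coord_event i false `&` frozen_event s F (fupd c i false)).
Proof.
have override_cons g b : X i g = b ->
    override (i :: s) (X^~ g) c = override s (X^~ g) (fupd c i b).
  move=> Xib; apply: funext => j; rewrite /override /fupd inE.
  by case: eqP => [->|_]; case: (i \in s).
apply/seteqP; split => t; rewrite /frozen_event /event /coord_event /=.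
  by case Xit: (X i t); rewrite (override_cons _ _ Xit); [left|right].
by case Xit: (X i t); rewrite (override_cons _ _ Xit) => -[[]|[]].
Qed.

Lemma frozen_event_depends s F c : depends_on s F -> frozen_event s F c = event F.
Proof. by move=> dF; apply/seteqP; split => t /=; rewrite /frozen_event /event /= dF. Qed.

Lemma product_law_setT : product_law setT 1 [::].
Proof. by split=> // s b us _; rewrite setIT mulr1; exact: iidX.2. Qed.

Lemma product_law_prob E kappa s' : product_law E kappa s' -> P E = kappa%:E.
Proof.
by case=> _ /(_ [::] (fun=> true) isT isT); rewrite cylinder_nil setTI big_nil mul1r.
Qed.

Lemma product_law_frozen E kappa s' F s c : product_law E kappa s' ->
  uniq s -> all [predC s'] s ->
  product_law (frozen_event s F c `&` E) (frozen_prob s F c * kappa) (s ++ s').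
Proof.
move=> [mE lawE]; elim: s c => [|i s IH] c /=.
  move=> _ _; rewrite frozen_event_nil; case: asboolP => _.
    by rewrite setTI mul1r.
  by rewrite set0I mul0r; split => // s0 b _ _; rewrite setI0 measure0 mulr0.
move=> /andP[si us] /andP[s'i as']; have IHx x := IH (fupd c i x) us as'.
have mIHx x : measurable (coord_event i x `&` frozen_event s F (fupd c i x) `&` E).
  by rewrite -setIA; apply: measurableI; [exact: measurable_coord_event|exact: (IHx x).1].
rewrite frozen_event_cons setIUl; split; first exact: measurableU.
move=> s0 b us0 /allP s0out.
have s0i : i \notin s0 by apply/negP => /s0out; rewrite /= inE eqxx.
have split_i x :
    cylinder s0 b `&` (coord_event i x `&` frozen_event s F (fupd c i x) `&` E) =
    cylinder (i :: s0) (fupd b i x) `&` (frozen_event s F (fupd c i x) `&` E).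
  rewrite cylinder_cons cylinder_fupd // /fupd eqxx.
  by apply/seteqP; split => t /=; tauto.
have law_i x :
    P (cylinder (i :: s0) (fupd b i x) `&` (frozen_event s F (fupd c i x) `&` E)) =
    (bern_weight x * \prod_(j <- s0) bern_weight (b j) *
     (frozen_prob s F (fupd c i x) * kappa))%:E.
  rewrite (IHx x).2 /= ?s0i //; last first.
    rewrite mem_cat negb_or si s'i /=; apply/allP => j /s0out /=.
    by rewrite inE negb_or => /andP[].
  rewrite big_cons /fupd eqxx; congr (_ * _ * _)%:E; apply: eq_big_seq => j js0.
  by case: eqP => // ji; rewrite -ji js0 in s0i.
rewrite setIUr measureU; first last.
- by apply/seteqP; split => // t [[_ [[+ _] _]] [_ [[+ _] _]]]; rewrite /coord_event /= => ->.
- by apply: measurableI; [exact: measurable_cylinder|exact: mIHx].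
- by apply: measurableI; [exact: measurable_cylinder|exact: mIHx].
rewrite !split_i; apply: etrans (congr2 +%E (law_i true) (law_i false)) _.
by rewrite -EFinD /bern_weight; congr EFin; ring.
Qed.

Lemma product_law_event s F c : uniq s -> depends_on s F ->
  product_law (event F) (frozen_prob s F c) s.
Proof.
move=> us dF; have := product_law_frozen F c product_law_setT us (all_predT s).
by rewrite setIT mulr1 cats0 frozen_event_depends.
Qed.

Lemma prob_event s F c : uniq s -> depends_on s F ->
  measurable (event F) /\ P (event F) = (frozen_prob s F c)%:E.
Proof.
move=> us dF; have law := product_law_event c us dF.
by split; [exact: law.1|exact: product_law_prob law].
Qed.

Lemma prob_eventI s s' FA FC : uniq s -> uniq s' -> all [predC s'] s ->
  depends_on s FA -> depends_on s' FC ->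
  P (event FA `&` event FC) = (P (event FA) * P (event FC))%E.
Proof.
move=> us us' ss' dA dC; pose c (_ : I) := true.
have lawC := product_law_event c us' dC.
have := product_law_prob (product_law_frozen FA c lawC us ss').
rewrite (frozen_event_depends c dA) => ->.
by rewrite (prob_event c us dA).2 (product_law_prob lawC).
Qed.

End BernoulliCylinders.

Section BondClusters.
Variable d : nat.
Implicit Types (g h : edge d -> bool) (x y z : site d) (i : 'I_d) (K : nat).

Definition sup_norm z : nat := \max_(j < d) absz (z j).

Lemma sup_norm_ge z j : (absz (z j) <= sup_norm z)%N.
Proof. exact: (@leq_bigmax _ (fun k : 'I_d => absz (z k)) j). Qed.

Lemma sup_norm_le z K : (forall j, absz (z j) <= K)%N -> (sup_norm z <= K)%N.
Proof. by move=> zK; apply/bigmax_leqP => j _; exact: zK. Qed.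

Lemma sup_norm_shift z i : (sup_norm (shift z i) <= (sup_norm z).+1)%N.
Proof.
apply: sup_norm_le => j; have := sup_norm_ge z j; rewrite ffunE.
by case: (j == i) => /=; lia.
Qed.

Lemma sup_norm_unshift z i : (sup_norm z <= (sup_norm (shift z i)).+1)%N.
Proof.
apply: sup_norm_le => j; have := sup_norm_ge (shift z i) j; rewrite ffunE.
by case: (j == i) => /=; lia.
Qed.

Lemma sup_norm_origin : sup_norm (origin d) = 0%N.
Proof. by apply/eqP; rewrite -leqn0; apply: sup_norm_le => j; rewrite ffunE. Qed.

Lemma finite_sup_norm_le K : finite_set [set z | (sup_norm z <= K)%N].
Proof.
pose f (k : {ffun 'I_d -> 'I_(K.*2.+1)}) : site d := [ffun j => (k j : nat)%:Z - K%:Z].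
apply: (@sub_finite_set _ _ (f @` setT)); last exact: finite_image.
move=> z /= zK; exists [ffun j => inord (absz (z j + K%:Z))] => //.
apply/ffunP => j; have := leq_trans (sup_norm_ge z j) zK.
by rewrite !ffunE; clear f; move: (z j) => zj zjK; rewrite inordK; lia.
Qed.

Lemma finite_sup_norm_lt (A : set (site d)) : finite_set A ->
  exists K, forall y, A y -> (sup_norm y < K)%N.
Proof.
move=> /finite_seqP [s ->]; exists (\max_(y <- s) sup_norm y).+1 => y /= ys.
by rewrite ltnS; apply: leq_bigmax_seq.
Qed.

Definition connected_by g := clos_refl_trans (site d) (open_adj g).

Definition percolates g x := ~ finite_set [set y | connected_by g x y].

Definition in_box K g : edge d -> bool := fun e => g e && (sup_norm e.1 <= K)%N.

Definition reaches K g x :=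
  exists2 y, (K <= sup_norm y)%N & connected_by (in_box K g) x y.

Definition remove_edges (S : seq (edge d)) g : edge d -> bool :=
  fun e => g e && (e \notin S).

Lemma connected_by_mono g h x y : (forall e, g e -> h e) ->
  connected_by g x y -> connected_by h x y.
Proof.
move=> gh; elim => [a b [e [ge ab]]|a|a b c _ IHab _ IHbc].
- by apply: rt_step; exists e; split => //; exact: gh.
- exact: rt_refl.
- exact: rt_trans IHab IHbc.
Qed.

Lemma percolates_mono g h x : (forall e, g e -> h e) -> percolates g x -> percolates h x.
Proof.
by move=> gh gx hx; apply/gx/(sub_finite_set _ hx) => y /=; exact: connected_by_mono.
Qed.

Lemma open_adj_in_box K g a b : open_adj g a b -> (sup_norm a < K)%N ->
  open_adj (in_box K g) a b.
Proof.
move=> [e [ge ab]] aK; exists e; split => //; rewrite /in_box ge /=.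
case: ab => -[ea eb]; first by rewrite ea ltnW.
by rewrite ea; apply: leq_trans (sup_norm_unshift b e.2) _; rewrite -ea -eb.
Qed.

(* A path leaving the box of radius [K] crosses its boundary before using
   any edge based outside the box. *)
Lemma connected_by_reaches K g x y : connected_by g x y -> (K <= sup_norm y)%N ->
  reaches K g x.
Proof.
move=> xy Ky; suff [//|[_ yK]] :
    reaches K g x \/ connected_by (in_box K g) x y /\ (sup_norm y < K)%N.
  by rewrite leqNgt yK in Ky.
elim: {Ky}(clos_rt_rtn1 _ _ _ _ xy) => [|a b ab _ IH].
  case: (ltnP (sup_norm x) K) => xK; first by right; split => //; exact: rt_refl.
  by left; exists x => //; exact: rt_refl.
case: IH => [|[xa aK]]; first by left.
have xb : connected_by (in_box K g) x b.
  exact: rt_trans xa (rt_step _ _ _ _ (open_adj_in_box ab aK)).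
by case: (ltnP (sup_norm b) K) => bK; [right|left; exists b].
Qed.

Lemma reaches_anti K K' g x : (K <= K')%N -> reaches K' g x -> reaches K g x.
Proof.
move=> KK' [y K'y xy]; apply: (connected_by_reaches (y := y)); last exact: leq_trans K'y.
by apply: connected_by_mono xy => e /andP[].
Qed.

Lemma reaches_ext K g h x : (forall e, (sup_norm e.1 <= K)%N -> g e = h e) ->
  reaches K g x -> reaches K h x.
Proof.
move=> gh; suff E : in_box K h = in_box K g by rewrite /reaches E.
apply: funext => e; rewrite /in_box.
by case: (leqP (sup_norm e.1) K) => eK; [rewrite gh|rewrite !andbF].
Qed.

Lemma percolatesP g x : percolates g x <-> forall K, reaches K g x.
Proof.
split=> [gx K|gx].
  have [y xy Ky] : exists2 y, connected_by g x y & (K <= sup_norm y)%N.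
    apply: contrapT => nfar; apply/gx/(sub_finite_set _ (finite_sup_norm_le K)).
    move=> y /= xy; apply: ltnW; rewrite ltnNge; apply/negP => Ky.
    by apply: nfar; exists y.
  exact: connected_by_reaches xy Ky.
move=> /finite_sup_norm_lt [K xK]; have [y Ky xy] := gx K.
have xy' : connected_by g x y by apply: connected_by_mono xy => e /andP[].
by have := xK y xy'; rewrite ltnNge Ky.
Qed.

(* The cluster of [x] is covered by the clusters, after the removal, of these
   finitely many sites. *)
Lemma percolates_remove_edges g x (S : seq (edge d)) : percolates g x ->
  exists2 v, v \in x :: [seq e.1 | e <- S] ++ [seq shift e.1 e.2 | e <- S]
           & percolates (remove_edges S g) v.
Proof.
move=> gx; set V := x :: _.
have cover y : connected_by g x y ->
    exists2 v, v \in V & connected_by (remove_edges S g) v y.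
  move=> xy; elim: (clos_rt_rtn1 _ _ _ _ xy) => [|a b [e [ge ab]] _ [v Vv va]].
    by exists x; [rewrite mem_head|exact: rt_refl].
  case eS: (e \in S); last first.
    exists v => //; apply: rt_trans va (rt_step _ _ _ _ _).
    by exists e; rewrite /remove_edges ge eS.
  exists b; last exact: rt_refl.
  rewrite inE mem_cat; apply/orP; right; apply/orP.
  by case: ab => -[ea eb]; [right|left]; apply/mapP; exists e.
apply: contrapT => nperc; apply/gx/(@sub_finite_set _ _
    (\bigcup_(v in [set` V]) [set y | connected_by (remove_edges S g) v y])).
  by move=> y /cover [v Vv vy]; exists v.
apply: bigcup_finite; first exact: finite_seq.
by move=> v Vv; apply: contrapT => vperc; apply: nperc; exists v.
Qed.

Lemma finite_box_edges K : finite_set [set e : edge d | (sup_norm e.1 <= K)%N].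
Proof.
apply: (@sub_finite_set _ _ ([set z | (sup_norm z <= K)%N] `*` setT)) => //.
by apply: finite_setX; [exact: finite_sup_norm_le|exact: finite_finset].
Qed.

Definition box_edges K : seq (edge d) :=
  enum_fset (fset_set [set e : edge d | (sup_norm e.1 <= K)%N]).

Lemma box_edges_uniq K : uniq (box_edges K).
Proof. exact: fset_uniq. Qed.

Lemma mem_box_edges K e : (e \in box_edges K) = (sup_norm e.1 <= K)%N.
Proof. by rewrite (in_fset_set (finite_box_edges K)); apply/idP/idP => [/set_mem|/mem_set]. Qed.

Lemma reaches_depends K x : depends_on (box_edges K) (fun g => reaches K g x).
Proof.
by move=> g c; split; apply: reaches_ext => e eK; rewrite /override mem_box_edges eK.
Qed.

End BondClusters.

Definition crossed_face d (e : edge d) : face d := (shift e.1 e.2, e.2).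

Definition crossing_edge d (Q : face d) : edge d :=
  ([ffun j => Q.1 j - (j == Q.2)%:Z], Q.2).

Lemma crossed_faceK d : cancel (@crossed_face d) (@crossing_edge d).
Proof.
by move=> [z i]; congr (_, _); apply/ffunP => j; rewrite !ffunE addrK.
Qed.

(* The bond between the dual sites
   [z + 1/2] and [z + e_i + 1/2] is open iff the face it crosses is closed. *)
Definition dual_config d (omega : face d -> bool) : edge d -> bool :=
  fun e => ~~ omega (crossed_face e).

Section DualLatticeGeometry.
Variables (R : realType) (d : nat).
Implicit Types (z y : site d) (i : 'I_d) (omega : face d -> bool).

Definition dual_pt z : 'rV[R]_d := \row_j ((z j)%:~R + 2^-1).

Definition dual_segment_pt z i (s : R) : 'rV[R]_d := dual_pt z + s *: delta_mx 0 i.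

Definition dual_segment z i : set 'rV[R]_d := dual_segment_pt z i @` `[0, 1].

Lemma dual_segment_ptE z i s j :
  dual_segment_pt z i s ord0 j = (z j)%:~R + 2^-1 + (if j == i then s else 0).
Proof. by rewrite !mxE eqxx /=; case: (j == i); rewrite ?mulr1 ?mulr0. Qed.

Lemma dual_segment_pt0 z i : dual_segment_pt z i 0 = dual_pt z.
Proof. by rewrite /dual_segment_pt scale0r addr0. Qed.

Lemma dual_segment_pt1 z i : dual_segment_pt z i 1 = dual_pt (shift z i).
Proof.
apply/rowP => j; rewrite dual_segment_ptE !mxE ffunE intrD.
by case: (j == i) => /=; rewrite ?addr0 //; lra.
Qed.

Lemma dual_segment_connected z i : connected (dual_segment z i).
Proof.
apply: connected_continuous_connected; first exact: segment_connected.
apply/continuous_subspaceT => s; apply: cvgD; first exact: cvg_cst.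
exact: scalel_continuous.
Qed.

Lemma half_gt0_lt1 : 0 < (2^-1 : R) < 1.
Proof. by rewrite invr_gt0 ltr0n invf_lt1 ?ltr0n // ltr1n. Qed.

Lemma intr_addr_frac_neq (a b : int) (r : R) : 0 < r < 1 -> a%:~R + r != b%:~R.
Proof.
move=> /andP[r0 r1]; apply/eqP => abr.
have ab : a < b by rewrite -(ltr_int R) -abr ltrDl.
have ba : b < a + 1 by rewrite -(ltr_int R) -abr intrD ltrD2l.
lia.
Qed.

Lemma intr_addr_frac_between (a b : int) (r : R) : 0 < r < 1 ->
  b%:~R <= a%:~R + r <= b%:~R + 1 -> a = b.
Proof.
move=> /andP[r0 r1] /andP[bar abr].
have ba : b < a + 1 by rewrite -(ltr_int R) intrD (le_lt_trans bar) // ltrD2l.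
have ab : a < b + 1 by rewrite -(ltr_int R) intrD (lt_le_trans _ abr) // ltrDl.
lia.
Qed.

Lemma face_on_dual_segment z i s (Q : face d) : 0 <= s <= 1 ->
  face_set Q (dual_segment_pt z i s) -> Q = crossed_face (z, i).
Proof.
case: Q => l k /andP[s0 s1] onQ.
have ki : k = i.
  apply/eqP; apply: contraT => ki; have := onQ k.
  rewrite /= eqxx dual_segment_ptE (negbTE ki) addr0 => /eqP.
  by rewrite (negbTE (intr_addr_frac_neq _ _ half_gt0_lt1)).
subst k; congr (_, _); apply/ffunP => j; rewrite ffunE.
have := onQ j; rewrite /= dual_segment_ptE; case: eqP => [->|_] /=.
  move=> li; have := half_gt0_lt1 => /andP[h0 h1].
  have zl : z i < l i by rewrite -(ltr_int R) -li; lra.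
  have lz : l i < z i + 2 by rewrite -(ltr_int R) intrD -li; lra.
  lia.
by rewrite addr0 => /(intr_addr_frac_between half_gt0_lt1) ->; rewrite addr0.
Qed.

Lemma dual_segment_ends z i :
  dual_segment z i (dual_pt z) /\ dual_segment z i (dual_pt (shift z i)).
Proof.
split; [exists 0; last exact: dual_segment_pt0|exists 1; last exact: dual_segment_pt1].
  by rewrite /= in_itv /= lexx ler01.
by rewrite /= in_itv /= lexx ler01.
Qed.

Lemma dual_segment_avoids omega (Qs : seq (face d)) z i : (forall Q, Q \in Qs -> omega Q) ->
  dual_config omega (z, i) ->
  dual_segment z i `<=` ~` \bigcup_(Q in [set` Qs]) face_set Q.
Proof.
move=> QsO zi _ [s s01 <-] [Q /= QQs onQ]; move: s01; rewrite /= in_itv /= => s01.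
by move: zi; rewrite /dual_config -(face_on_dual_segment s01 onQ) QsO.
Qed.

Lemma dual_cluster_in_component omega (Qs : seq (face d)) (x : 'rV[R]_d) z y :
  let A := ~` \bigcup_(Q in [set` Qs]) face_set Q in
  (forall Q, Q \in Qs -> omega Q) -> connected_component A x (dual_pt z) ->
  connected_by (dual_config omega) z y -> connected_component A x (dual_pt y).
Proof.
move=> A QsO xz zy; elim: (clos_rt_rtn1 _ _ _ _ zy) => // a b [[w i] [wi ab]] _ xa.
apply: connected_component_trans xa _.
have [wA wB] := dual_segment_ends w i.
have segA := dual_segment_avoids QsO wi.
have segC : connected (dual_segment w i) by exact: dual_segment_connected.
by case: ab => -[/= <- ->];
  [exact: (connected_component_max (A := A) wA segA segC wB)|
   exact: (connected_component_max (A := A) wB segA segC wA)].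
Qed.

Lemma dual_box_dual_pt n z : (sup_norm z < n)%N -> dual_box n (dual_pt z).
Proof.
move=> zn; split; first by exists z => j; rewrite mxE.
move=> j; rewrite mxE; apply: le_lt_trans (ler_normD _ _) _.
have : ((absz (z j)).+1 <= n)%N := leq_ltn_trans (sup_norm_ge z j) zn.
rewrite -(ler_nat R) -addn1 natrD natr_absz intr_norm.
rewrite (@ger0_norm _ 2^-1); last by rewrite invr_ge0 ler0n.
by have := half_gt0_lt1; lra.
Qed.

Lemma bounded_dual_pts_finite (C : set 'rV[R]_d) : bounded_Rd C ->
  finite_set [set y | C (dual_pt y)].
Proof.
move=> [M CM]; have [N MN] : exists N : nat, M + 1 <= N%:R.
  exists (Num.bound (`|M| + 1)); apply/ltW/(le_lt_trans _ (archi_boundP _)).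
    by rewrite lerD2r ler_norm.
  by rewrite addr_ge0.
apply: (sub_finite_set _ (finite_sup_norm_le d N)) => y /= Cy.
apply: sup_norm_le => j; have := CM _ Cy j; rewrite mxE.
rewrite -(ler_nat R) natr_absz intr_norm !ler_norml => /andP[yM My].
by have /andP[h0 h1] := half_gt0_lt1; apply/andP; split; lra.
Qed.

Lemma enclosed_not_percolates omega n z :
  encloses (fun Q => omega Q) (@dual_box R d n) -> (sup_norm z < n)%N ->
  ~ percolates (dual_config omega) z.
Proof.
move=> [Qs [QsO [x /= [_ bdC boxC]]]] zn; apply.
apply: (sub_finite_set _ (bounded_dual_pts_finite bdC)) => y /= zy.
exact: dual_cluster_in_component QsO (boxC _ (dual_box_dual_pt zn)) zy.
Qed.

End DualLatticeGeometry.

Lemma iid_dual_config (R : realType) d (dT : measure_display) (T : measurableType dT)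
    (P : probability T R) (omega : face d -> T -> bool) p :
  iid_bernoulli P omega p ->
  iid_bernoulli P (fun e t => dual_config (omega^~ t) e) (1 - p).
Proof.
move=> [mO lawO]; split.
  move=> e; rewrite (_ : [set t | _] = ~` [set t | omega (crossed_face e) t]).
    exact/measurableC/mO.
  by apply/seteqP; split => t; rewrite /dual_config /=; case: (omega _ t).
move=> s b us.
have := lawO (map (@crossed_face d) s) (fun Q => ~~ b (crossing_edge Q)).
rewrite (map_inj_uniq (can_inj (@crossed_faceK d))) us big_map => /(_ isT).
have -> : \bigcap_(Q in [set` map (@crossed_face d) s])
      [set t | omega Q t = ~~ b (crossing_edge Q)] =
    \bigcap_(e in [set` s]) [set t | dual_config (omega^~ t) e = b e].
  apply/seteqP; split => t tb.
    move=> e es /=; rewrite /dual_config (tb (crossed_face e)) ?crossed_faceK ?negbK //.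
    exact: map_f.
  move=> Q /= /mapP [e es ->]; rewrite crossed_faceK.
  by rewrite -(tb e es) /dual_config negbK.
move=> ->; congr EFin; apply: eq_bigr => e _; rewrite crossed_faceK.
by case: (b e) => /=; ring.
Qed.

Section PercolationProbability.
Variables (R : realType) (d : nat) (dT : measure_display) (T : measurableType dT)
  (P : probability T R) (X : edge d -> T -> bool) (q : R).
Hypothesis iidX : iid_bernoulli P X q.

Lemma prob_reaches K x c : P (event X (fun g => reaches K g x)) =
  (frozen_prob q (box_edges d K) (fun g => reaches K g x) c)%:E.
Proof. exact: (prob_event iidX c (box_edges_uniq d K) (reaches_depends K x)).2. Qed.

Lemma measurable_reaches K x : measurable (event X (fun g => reaches K g x)).
Proof.
exact: (prob_event iidX (fun=> true) (box_edges_uniq d K) (reaches_depends K x)).1.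
Qed.

Lemma percolates_event x : event X (fun g => percolates g x) =
  \bigcap_K event X (fun g => reaches K g x).
Proof.
apply/seteqP; split => t /=; first by move/percolatesP => tx K _; exact: tx.
by move=> tx; apply/percolatesP => K; exact: tx.
Qed.

Lemma measurable_percolates x : measurable (event X (fun g => percolates g x)).
Proof.
by rewrite percolates_event; apply: bigcapT_measurable => K; exact: measurable_reaches.
Qed.

Lemma reaches_prob_cvg x : (fun K => P (event X (fun g => reaches K g x))) @ \oo -->
  P (event X (fun g => percolates g x)).
Proof.
rewrite percolates_event; apply: nonincreasing_cvg_mu.
- exact: le_lt_trans (probability_le1 _ (measurable_reaches 0 x)) (ltey _).
- by move=> K; exact: measurable_reaches.
- by rewrite -percolates_event; exact: measurable_percolates.
- by move=> m n mn; apply/subsetPset => t; exact: reaches_anti.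
Qed.

End PercolationProbability.

Lemma percolation_prob_unique (R : realType) d q x
    (dT : measure_display) (T : measurableType dT) (P : probability T R)
    (X : edge d -> T -> bool)
    (dT' : measure_display) (T' : measurableType dT') (P' : probability T' R)
    (X' : edge d -> T' -> bool) :
  iid_bernoulli P X q -> iid_bernoulli P' X' q ->
  P (event X (fun g => percolates g x)) = P' (event X' (fun g => percolates g x)).
Proof.
move=> iidX iidX'; have seqE : (fun K => P' (event X' (fun g => reaches K g x))) =
    (fun K => P (event X (fun g => reaches K g x))).
  apply: funext => K.
  by rewrite (prob_reaches iidX K x (fun=> true)) (prob_reaches iidX' K x (fun=> true)).
have := reaches_prob_cvg (x := x) iidX'; rewrite seqE.
exact: cvg_unique (reaches_prob_cvg (x := x) iidX).
Qed.

Lemma pc_bond_ge0 (R : realType) d : 0 <= @pc_bond R d.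
Proof.
rewrite /pc_bond; set S := [set q : R | _].
have [[s Ss]|S0] := pselect (S !=set0).
  have ub : has_ubound S by exists 1 => q [/andP[_ ->]].
  by apply: le_trans (sup_upper_bound (conj (ex_intro _ s Ss) ub) Ss); case: Ss => /andP[].
by rewrite (_ : S = set0) ?sup0 //; apply/seteqP; split => // q Sq; apply: S0; exists q.
Qed.

Lemma not_bond_theta_zero (R : realType) d (p : R) : 0 <= p -> p < 1 - @pc_bond R d ->
  ~ @bond_theta_zero R d (1 - p).
Proof.
move=> p0 ppc theta0; have pc0 := pc_bond_ge0 R d.
set S := [set q : R | 0 <= q <= 1 /\ @bond_theta_zero R d q].
have ub : has_ubound S by exists 1 => q [/andP[_ ->]].
have Sp : S (1 - p) by split => //; apply/andP; split; lra.
by have := sup_upper_bound (conj (ex_intro _ _ Sp) ub) Sp; rewrite -/(@pc_bond R d); lra.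
Qed.

Section EnclosureProbability.
Variables (R : realType) (d : nat) (dT : measure_display) (T : measurableType dT)
  (P : probability T R) (omega : face d -> T -> bool) (p : R).
Hypothesis iid_omega : iid_bernoulli P omega p.

Let X (e : edge d) (t : T) : bool := dual_config (omega^~ t) e.
Let iidX : iid_bernoulli P X (1 - p) := iid_dual_config iid_omega.

Definition encloses_event n : set T :=
  [set t | encloses (fun Q => omega Q t) (@dual_box R d n)].

Definition percolation_event : set T := event X (fun g => percolates g (origin d)).

Definition reach_event r : set T := event X (fun g => reaches r g (origin d)).

Definition cut_off (r K : nat) (g : edge d -> bool) :=
  forall x, (sup_norm x <= r.+1)%N -> ~ reaches K (remove_edges (box_edges d r) g) x.

Definition cut_off_event r K : set T := event X (cut_off r K).

Lemma cut_off_depends r K :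
  depends_on [seq e <- box_edges d K | e \notin box_edges d r] (cut_off r K).
Proof.
have agree g c e : (sup_norm e.1 <= K)%N ->
    remove_edges (box_edges d r) g e =
    remove_edges (box_edges d r)
      (override [seq e <- box_edges d K | e \notin box_edges d r] g c) e.
  rewrite -mem_box_edges => eK; rewrite /remove_edges /override mem_filter eK andbT.
  by case: (e \in box_edges d r); rewrite ?andbF.
move=> g c; split => gcut x xr gx; apply: (gcut x xr).
  by apply: reaches_ext gx => e eK; exact: agree.
by apply: reaches_ext gx => e eK; rewrite (agree g c).
Qed.

Lemma measurable_cut_off_event r K : measurable (cut_off_event r K).
Proof.
have uK := filter_uniq (fun e => e \notin box_edges d r) (box_edges_uniq d K).
exact: (prob_event iidX (fun=> true) uK (cut_off_depends r K)).1.
Qed.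

Lemma reach_cut_off_indep r K :
  P (reach_event r `&` cut_off_event r K) = (P (reach_event r) * P (cut_off_event r K))%E.
Proof.
apply: (prob_eventI iidX (box_edges_uniq d r) (filter_uniq _ (box_edges_uniq d K)) _
  (reaches_depends r _) (cut_off_depends r K)).
by apply/allP => e er /=; rewrite mem_filter er.
Qed.

Lemma cut_off_percolation_disjoint r K :
  cut_off_event r K `&` percolation_event = set0.
Proof.
apply/seteqP; split => // t [tcut /(percolates_remove_edges (box_edges d r)) [v vS vperc]].
apply: (tcut v); last exact: (percolatesP _ _).1 vperc K.
move: vS; rewrite inE mem_cat => /orP[/eqP->|/orP[]/mapP[e]];
  rewrite ?sup_norm_origin // mem_box_edges => er ->; first exact: leqW.
exact: leq_trans (sup_norm_shift _ _) _.
Qed.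

Lemma cut_off_nondecreasing r : nondecreasing_seq (cut_off_event r).
Proof.
move=> m n mn; apply/subsetPset => t tcut x xr tx; apply: (tcut x xr).
exact: reaches_anti mn tx.
Qed.

Lemma measurable_encloses_event n : measurable (encloses_event n).
Proof.
(* Enclosure by a given finite family of faces is a deterministic property of
   the family, so the event is a countable union of cylinders. *)
pose enclosing (Qs : seq (face d)) := exists x : 'rV[R]_d,
  let A := ~` \bigcup_(Q in [set` Qs]) face_set Q in
  [/\ A x, bounded_Rd (connected_component A x) & dual_box n `<=` connected_component A x].
have -> : encloses_event n = \bigcup_(Qs : seq (face d))
    (if `[< enclosing Qs >] then \bigcap_(Q in [set` Qs]) [set t | omega Q t] else set0).
  apply/seteqP; split => t.
    by move=> [Qs [QsO Qsx]]; exists Qs => //; case: asboolP.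
  by move=> [Qs _]; case: asboolP => // Qsx QsO; exists Qs.
apply: countable_bigcupT_measurable => [|Qs]; first exact: countableP.
case: asboolP => // _.
by apply: fin_bigcap_measurable => // Q _; exact: iid_omega.1.
Qed.

Lemma encloses_event_sub_cut_off r n : (r.+1 < n)%N ->
  encloses_event n `<=` \bigcup_K cut_off_event r K.
Proof.
move=> rn t tenc; pose D := fset_set [set x : site d | (sup_norm x <= r.+1)%N].
have memD x : (x \in D) = (sup_norm x <= r.+1)%N.
  rewrite (in_fset_set (finite_sup_norm_le d r.+1)).
  by apply/idP/idP => [/set_mem|/mem_set].
have [K0 _ cut] : \forall K \near \oo, (\bigcap_(x in [set` D])
    [set K | ~ reaches K (remove_edges (box_edges d r) (X^~ t)) x]) K.
  apply: filter_bigI => x; rewrite memD => xr.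
  have xperc : ~ percolates (remove_edges (box_edges d r) (X^~ t)) x.
    move=> /(@percolates_mono _ _ (X^~ t)) xp.
    by apply: (enclosed_not_percolates tenc (leq_ltn_trans xr rn)); apply: xp => e /andP[].
  have [K1 xK1] : exists K, ~ reaches K (remove_edges (box_edges d r) (X^~ t)) x.
    by apply: contrapT => /forallNP xK; apply/xperc/percolatesP => K; exact: contrapT (xK K).
  by exists K1 => // K K1K xK; exact/xK1/(reaches_anti K1K).
by exists K0 => // x xr; apply: (cut K0 (leqnn K0) x); rewrite /= memD.
Qed.

Let measurable_percolation_event : measurable percolation_event :=
  measurable_percolates iidX (origin d).

Let measurable_reach_event r : measurable (reach_event r) :=
  measurable_reaches iidX r (origin d).

Let probE (A : set T) : measurable A -> P A = (fine (P A))%:E :=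
  fun mA => esym (fineK (fin_num_measure P A mA)).

Let theta := fine (P percolation_event).
Let reach_prob r := fine (P (reach_event r)).

Lemma theta_gt0 : 0 <= p -> p < 1 - @pc_bond R d -> 0 < theta.
Proof.
move=> p0 ppc; rewrite lt0r fine_ge0 ?measure_ge0 // andbT; apply/eqP => theta0.
apply: (not_bond_theta_zero p0 ppc) => dT' T' P' X' iidX'.
by rewrite -(percolation_prob_unique _ iidX iidX') probE // -/theta theta0.
Qed.

Lemma reach_prob_cvg : reach_prob @ \oo --> theta.
Proof.
have := reaches_prob_cvg (x := origin d) iidX.
by rewrite [P _]probE // => /fine_cvgP[].
Qed.

Lemma theta_le_reach_prob r : theta <= reach_prob r.
Proof.
rewrite -lee_fin -!probE //; apply: le_measure; rewrite ?mem_set //.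
by move=> t /percolatesP; apply.
Qed.

Lemma cut_off_prob_le r K : 0 < theta ->
  (P (cut_off_event r K) <= (1 - theta / reach_prob r)%:E)%E.
Proof.
move=> theta0; have g0 := lt_le_trans theta0 (theta_le_reach_prob r).
have mcut := measurable_cut_off_event r K.
have mRC : measurable (reach_event r `&` cut_off_event r K) by exact: measurableI.
have : (P (reach_event r `&` cut_off_event r K) + P percolation_event <=
        P (reach_event r))%E.
  rewrite -measureU //; last by rewrite -setIA cut_off_percolation_disjoint setI0.
  apply: le_measure; [exact/mem_set/measurableU|exact/mem_set/measurable_reach_event|].
  by move=> t [[]|/percolatesP tperc] //; exact: tperc.
rewrite reach_cut_off_indep (probE mcut) (probE (measurable_reach_event r)).
rewrite (probE measurable_percolation_event) -EFinM -EFinD !lee_fin.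
rewrite -/theta -/(reach_prob r) => indep_bound.
rewrite (_ : 1 - theta / _ = (reach_prob r - theta) / reach_prob r); last first.
  by field; exact: lt0r_neq0.
by rewrite ler_pdivlMr //; lra.
Qed.

Lemma encloses_prob_le r n : 0 < theta -> (r.+1 < n)%N ->
  fine (P (encloses_event n)) <= 1 - theta / reach_prob r.
Proof.
move=> theta0 rn; have mU : measurable (\bigcup_K cut_off_event r K).
  by apply: bigcupT_measurable => K; exact: measurable_cut_off_event.
rewrite -lee_fin -probE; last exact: measurable_encloses_event.
apply: (@le_trans _ _ (P (\bigcup_K cut_off_event r K))).
  apply: le_measure; rewrite ?mem_set //; first exact: measurable_encloses_event.
  exact: encloses_event_sub_cut_off.
have cvgU := nondecreasing_cvg_mu (mu := P) (measurable_cut_off_event r) mU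
  (cut_off_nondecreasing r).
rewrite -(cvg_lim _ cvgU) //; apply: lime_le; first by apply/cvg_ex; eexists; exact: cvgU.
by near=> K; exact: cut_off_prob_le.
Unshelve. all: by end_near.
Qed.

Lemma encloses_prob_cvg0 : 0 <= p -> p < 1 - @pc_bond R d ->
  (fun n => P (encloses_event n)) @ \oo --> 0%E.
Proof.
move=> p0 ppc; have theta0 : theta != 0 := lt0r_neq0 (theta_gt0 p0 ppc).
apply: cvg_EFin; first by near=> n; exact: fin_num_measure (measurable_encloses_event n).
rewrite -(cvg_shiftn 2).
apply: (@squeeze_cvgr _ _ _ _ (fun=> 0) (fun n => 1 - theta / reach_prob n)).
- near=> n; rewrite fine_ge0 ?measure_ge0 //=.
  by apply: encloses_prob_le; [exact: theta_gt0|rewrite addn2].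
- exact: cvg_cst.
- rewrite (_ : 0 = 1 - theta / theta); last by rewrite divff // subrr.
  exact: cvgB (cvg_cst (1 : R)) (cvgM (cvg_cst theta) (cvgV theta0 reach_prob_cvg)).
Unshelve. all: by end_near.
Qed.

End EnclosureProbability.

Theorem lemma3p4 (R : realType) (d : nat) (p : R)
  (dT : measure_display) (T : measurableType dT) (P : probability T R)
  (omega : face d -> T -> bool) :
  (2 <= d)%N -> 0 <= p -> p < 1 - @pc_bond R d ->
  iid_bernoulli P omega p ->
  (fun n : nat =>
     P [set t | encloses (fun Q => omega Q t) (@dual_box R d n)])
    @ \oo --> (0%E : \bar R).
Proof.
by move=> _ p0 ppc iid_omega; exact: (encloses_prob_cvg0 iid_omega p0 ppc).
Qed.
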